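(* Let $n=3$ and $r=2$. Let $\theta=(\theta_1,\theta_2,\theta_3)\in\mathbb{R}^3$ and let $T_1,T_2,T_3$ be independent random variables with $T_i\sim N(\theta_i,1)$. Let $\Phi$ be the standard normal cumulative distribution function, and set $p_i=1-\Phi(T_i)$, $q_i=\Phi(T_i)$. With $p_{(1)}\le p_{(2)}\le p_{(3)}$ and $q_{(1)}\le q_{(2)}\le q_{(3)}$ the order statistics, define $p^+_{2/3}=2\,p_{(2)}$ and $p^-_{2/3}=2\,q_{(2)}$. Let $n^+=|\{i:\theta_i>0\}|$, $n^-=|\{i:\theta_i<0\}|$ and let $H_{2/3}$ be the hypothesis $n^+<2$ and $n^-<2$. Then $p_{2/3}=\min\{p^+_{2/3},p^-_{2/3}\}$ is a valid $p$-value for $H_{2/3}$: for every $\alpha\in(0,1/2)$ and every $\theta$ satisfying $H_{2/3}$, $\Pr_\theta(p_{2/3}\le\alpha)\le\alpha$.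
   Context: $p^+_{2/3}$ and $p^-_{2/3}$ are the Bonferroni partial conjunction $p$-values $(n-r+1)p_{(r)}$ and $(n-r+1)q_{(r)}$ with $n=3$, $r=2$. $H_{2/3}$ is the ''2 out of 3 directional replicability'' null hypothesis. *)

From HB Require Import structures.
From mathcomp Require Import all_boot all_order all_algebra.
From mathcomp Require Import all_classical all_reals all_analysis.
Set Implicit Arguments. Unset Strict Implicit. Unset Printing Implicit Defensive.
Import Order.TTheory GRing.Theory Num.Theory.
Local Open Scope classical_set_scope.
Local Open Scope ring_scope.

Definition Phi {R : realType} (x : R) : R :=
  fine (normal_prob 0 1 `]-oo, x]).

(* Mutual independence of a finite family of real random variables:
   the product rule holds for every choice of Borel sets
   (taking A_i = setT recovers all subfamilies). *)
Definition mutually_independent {R : realType} d (T : measurableType d)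
    (P : probability T R) (n : nat) (X : 'I_n -> {RV P >-> R}) : Prop :=
  forall A : 'I_n -> set R, (forall i, measurable (A i)) ->
    P (\bigcap_(i in [set: 'I_n]) (X i @^-1` A i)) =
    (\prod_(i < n) P (X i @^-1` A i))%E.

(* k-th order statistic (1-based) of a finite list of reals. *)
Definition order_stat {R : realType} (k : nat) (s : seq R) : R :=
  nth 0 (sort <=%R s) k.-1.

Definition pc_bonf {R : realType} (n r : nat) (p : 'I_n -> R) : R :=
  (n - r + 1)%:R * order_stat r [seq p i | i <- enum 'I_n].

Definition pplus {R : realType} (n : nat) (t : 'I_n -> R) : 'I_n -> R :=
  fun i => 1 - Phi (t i).
Definition pminus {R : realType} (n : nat) (t : 'I_n -> R) : 'I_n -> R :=
  fun i => Phi (t i).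

Definition p_rn {R : realType} (n r : nat) (t : 'I_n -> R) : R :=
  Num.min (pc_bonf r (pplus t)) (pc_bonf r (pminus t)).

Definition n_plus {R : realType} (n : nat) (theta : 'I_n -> R) : nat :=
  #|[set i : 'I_n | 0 < theta i]|.
Definition n_minus {R : realType} (n : nat) (theta : 'I_n -> R) : nat :=
  #|[set i : 'I_n | theta i < 0]|.

Definition H_rn {R : realType} (n r : nat) (theta : 'I_n -> R) : Prop :=
  (n_plus theta < r)%N /\ (n_minus theta < r)%N.

(* Put e = alpha / 2, U = {x | 1 - Phi x <= e}, D = {x | Phi x <= e} and let
   G be the rest of the line.  The event {p_{2/3} <= alpha} says that at least
   two of the T_i fall in U, or at least two fall in D; by independence each of
   these has probability at most  x y + y z + z x - 2 x y z  in the respective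
   tail masses.  Under H_{2/3} some theta_z is 0 and the other two indices can
   be named so that theta_p >= 0 >= theta_q.  At theta_z = 0 both tails have
   mass at most e (probability integral transform), and the monotone likelihood
   ratio of the normal location family gives (1 - 2e) D_p <= e G_p and
   (1 - 2e) U_q <= e G_q.  Adding up, the bound is at most
   e (U_p + D_p + G_p) + e (U_q + D_q + G_q) = 2 e = alpha. *)

From HB Require Import structures.
From mathcomp Require Import all_boot all_order all_algebra.
From mathcomp Require Import all_classical all_reals all_analysis.
From mathcomp Require Import measurable_realfun ring lra.
Import Order.TTheory GRing.Theory Num.Theory.
Local Open Scope classical_set_scope.
Local Open Scope ring_scope.

Lemma bigcup_nondecreasing_measure_le d (T : measurableType d) (R : realType)
    (mu : {measure set T -> \bar R}) (F : nat -> set T) (b : \bar R) :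
  (forall n, measurable (F n)) -> nondecreasing_seq F ->
  (forall n, mu (F n) <= b)%E -> (mu (\bigcup_n F n) <= b)%E.
Proof.
move=> mF ndF Fb.
have Fcvg := nondecreasing_cvg_mu (mu := mu) mF (bigcup_measurable (fun k _ => mF k)) ndF.
rewrite -(cvg_lim _ Fcvg) //; apply: lime_le; first exact: cvgP Fcvg.
exact: nearW.
Qed.

Section measure_cdf.
Context {R : realType} (mu : probability (measurableTypeR R) R).

Definition measure_cdf (x : R) : R := fine (mu `]-oo, x]%classic).

Lemma measure_cdfE x : mu `]-oo, x]%classic = (measure_cdf x)%:E.
Proof. by rewrite fineK // fin_num_measure. Qed.

Lemma measure_cdf_nondecreasing : {homo measure_cdf : x y / x <= y}.
Proof.
move=> x y xy; rewrite -lee_fin -!measure_cdfE; apply: le_measure; rewrite ?inE //.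
by apply: subset_itvl; rewrite bnd_simp.
Qed.

Lemma measurable_measure_cdf : measurable_fun setT measure_cdf.
Proof. exact: nondecreasing_measurable measure_cdf_nondecreasing. Qed.

Lemma measurable_measure_cdf_le b : measurable [set x | measure_cdf x <= b].
Proof.
have := measurable_measure_cdf measurableT _ (measurable_itv `]-oo, b]).
by rewrite setTI; congr measurable; apply/seteqP; split => x /=; rewrite in_itv.
Qed.

Lemma exists_measure_cdf_gt b : b < 1 -> exists x, b < measure_cdf x.
Proof.
move=> b1; apply/not_existsP => cdf_le.
pose F n : set (measurableTypeR R) := `]-oo, n%:R]%classic.
have : (mu (\bigcup_n F n) <= b%:E)%E.
  apply: bigcup_nondecreasing_measure_le => [n|m n mn|n].
  - exact: measurable_itv.
  - by apply/subsetPset; apply: subset_itvl; rewrite bnd_simp ler_nat.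
  - by have /negP := cdf_le n%:R; rewrite -leNgt -lee_fin -measure_cdfE.
have -> : \bigcup_n F n = setT.
  apply/seteqP; split => // x _; exists (Num.truncn x).+1 => //.
  by rewrite /F /= in_itv /= ltW // truncnS_gt.
by rewrite probability_setT lee_fin leNgt b1.
Qed.

Lemma measure_cdf_tail_le (b : R) : 0 <= b ->
  (mu [set x | (measure_cdf x <= b)%R] <= b%:E)%E.
Proof.
(* D is an initial segment of the line: either ]-oo, sup D] or, when the sup is
   not attained, the increasing union of the ]-oo, sup D - 1/(n+1)]. *)
move=> b_ge0; set D := [set x | _].
have mD : measurable D := measurable_measure_cdf_le b.
have [b_ge1|b_lt1] := leP 1 b.
  by apply: le_trans (probability_le1 mu mD) _; rewrite lee_fin.
have [->|/set0P[x1 Dx1]] := eqVneq D set0; first by rewrite measure0 lee_fin.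
have [x0 b_lt_cdf] := exists_measure_cdf_gt _ b_lt1.
have D_ub x : D x -> x <= x0.
  move=> Dx; rewrite leNgt; apply/negP => /ltW/measure_cdf_nondecreasing cdf_le.
  by move: b_lt_cdf; rewrite ltNge (le_trans cdf_le Dx).
have supD : has_sup D by split; [exists x1 | exists x0].
set s := sup D.
have [Ds|nDs] := pselect (D s).
  apply: (@le_trans _ _ (mu `]-oo, s]%classic)).
    apply: le_measure; rewrite ?inE; [exact: mD | exact: measurable_itv |].
    by move=> x Dx; rewrite /= in_itv /= (sup_upper_bound supD Dx).
  by rewrite measure_cdfE lee_fin.
pose F n : set (measurableTypeR R) := `]-oo, s - n.+1%:R^-1]%classic.
apply: (@le_trans _ _ (mu (\bigcup_n F n))).
  apply: le_measure; rewrite ?inE; [exact: mD | |].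
    exact: bigcup_measurable (fun n _ => measurable_itv _).
  move=> x Dx; have x_lt_s : x < s.
    by rewrite lt_neqAle (sup_upper_bound supD Dx) andbT; apply: contra_notN nDs => /eqP <-.
  have [k xk] := ltr_add_invr x_lt_s.
  by exists k => //; rewrite /F /= in_itv /= lerBrDr ltW.
apply: bigcup_nondecreasing_measure_le => [n|m n mn|n].
- exact: measurable_itv.
- apply/subsetPset; apply: subset_itvl.
  by rewrite bnd_simp lerD2l lerN2 lef_pV2 ?posrE // ler_nat.
- have inv_gt0 : 0 < n.+1%:R^-1 :> R by rewrite invr_gt0.
  have [e De se] := sup_adherent inv_gt0 supD.
  have := measure_cdf_nondecreasing _ _ (ltW se); rewrite -lee_fin -measure_cdfE => cdf_le.
  by apply: le_trans cdf_le _; rewrite lee_fin.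
Qed.

End measure_cdf.

Section standard_normal.
Context {R : realType}.
Local Notation N := (normal_prob (0 : R) 1).

Lemma Phi_nondecreasing : {homo @Phi R : x y / x <= y}.
Proof. exact: measure_cdf_nondecreasing. Qed.

Lemma normal_pdf0N (x : R) : normal_pdf 0 1 (- x) = normal_pdf 0 1 x.
Proof. by rewrite /normal_pdf oner_eq0 /normal_fun !subr0 sqrrN. Qed.

Lemma normal_prob0_preimageN (A : set R) : measurable A ->
  N (-%R @^-1` A) = N A.
Proof.
move=> mA.
have mpdf : measurable_fun A (fun x => (normal_pdf (0 : R) 1 x)%:E).
  by apply/measurable_EFinP; apply: measurable_funTS; exact: measurable_normal_pdf.
have pdf_ge0 : {in A, forall x, (0 <= (normal_pdf (0 : R) 1 x)%:E)%E}.
  by move=> x _; rewrite lee_fin normal_pdf_ge0.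
have push := @ge0_integral_pushforward _ _ _ _ R
  (-%R : measurableTypeR R -> measurableTypeR R) (@oppr_measurable R setT)
  lebesgue_measure A _ mA mpdf pdf_ge0.
move: push; rewrite [X in X = _](eq_measure_integral lebesgue_measure) => [push|B mB _].
  by rewrite [RHS]push; apply: eq_integral => x _; rewrite /= normal_pdf0N.
exact: (@lebesgue_measureN R B mB).
Qed.

Lemma normal_prob0_set1 (x : R) : N [set x] = 0%E.
Proof.
have null1 : (@lebesgue_measure R).-null_set [set x].
  move=> A mA Ax; apply/eqP; rewrite -measure_le0.
  by rewrite -(lebesgue_measure_set1 x); apply: le_measure; rewrite ?inE.
exact: (normal_prob_dominates 0 1 null1).
Qed.

Lemma PhiN (x : R) : Phi (- x) = 1 - Phi x.
Proof.
have N_itvNyo : N `]-oo, x[ = N `]-oo, x].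
  rewrite -(setUitv1 true (_ : -oo <= BLeft x)%O) // measureU //.
    by rewrite [X in (_ + X)%E](_ : _ = 0%E) ?adde0 //; exact: normal_prob0_set1.
  apply/seteqP; split => // y [/=]; rewrite in_itv /= => + yx; subst y.
  by rewrite ltxx.
rewrite /Phi -(opp_preimage_itvbndy true x false) normal_prob0_preimageN //.
rewrite -setCitvl probability_setC // fineB ?fin_num_measure //.
by congr (_ - fine _); exact: N_itvNyo.
Qed.

Definition lower_tail (b : R) := [set x | Phi x <= b].
Definition upper_tail (b : R) := [set x | 1 - Phi x <= b].

Lemma upper_tailE b : upper_tail b = -%R @^-1` lower_tail b.
Proof. by apply/seteqP; split => x; rewrite /upper_tail /lower_tail /= PhiN. Qed.

Lemma measurable_lower_tail b : measurable (lower_tail b).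
Proof. exact: measurable_measure_cdf_le. Qed.

Lemma measurable_upper_tail b : measurable (upper_tail b).
Proof.
rewrite upper_tailE -[X in measurable X]setTI.
exact: oppr_measurable measurableT _ (measurable_lower_tail b).
Qed.

Lemma normal_prob0_lower_tail b : 0 <= b -> (N (lower_tail b) <= b%:E)%E.
Proof. exact: measure_cdf_tail_le. Qed.

Lemma normal_prob0_upper_tail b : 0 <= b -> (N (upper_tail b) <= b%:E)%E.
Proof.
move=> b_ge0; rewrite upper_tailE normal_prob0_preimageN.
  exact: normal_prob0_lower_tail.
exact: measurable_lower_tail.
Qed.

End standard_normal.

Section normal_likelihood_ratio.
Context {R : realType}.

Definition normal_mass (t : R) (A : set R) : R := fine (normal_prob t 1 A).

Lemma normal_massE t {A : set R} : measurable A -> normal_prob t 1 A = (normal_mass t A)%:E.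
Proof. by move=> mA; rewrite fineK // fin_num_measure. Qed.

Lemma normal_mass_ge0 t A : 0 <= normal_mass t A.
Proof. by rewrite fine_ge0 // measure_ge0. Qed.

Lemma normal_massC t (A : set R) : measurable A ->
  normal_mass t (~` A) = 1 - normal_mass t A.
Proof. by move=> mA; rewrite /normal_mass probability_setC // fineB ?fin_num_measure. Qed.

Lemma normal_massU t (A B : set R) : measurable A -> measurable B -> A `&` B = set0 ->
  normal_mass t (A `|` B) = normal_mass t A + normal_mass t B.
Proof. by move=> mA mB AB0; rewrite /normal_mass measureU // fineD ?fin_num_measure. Qed.

Lemma normal_pdf_shift (t x : R) :
  normal_pdf t 1 x = normal_pdf 0 1 x * expR (t * x - t ^+ 2 / 2).
Proof.
rewrite /normal_pdf oner_eq0 /= /normal_fun -mulrA -expRD expr1n.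
by congr (_ * expR _); field.
Qed.

Let measurable_pdf m (A : set R) : measurable_fun A (fun x => (normal_pdf m 1 x)%:E).
Proof.
by apply/measurable_EFinP; apply: measurable_funTS; exact: measurable_normal_pdf.
Qed.

Let pdf_ge0 m (A : set R) : forall x, A x -> (0 <= (normal_pdf m 1 x)%:E)%E.
Proof. by move=> x _; rewrite lee_fin normal_pdf_ge0. Qed.

Lemma normal_prob_le_scale (t k : R) (A : set R) :
  measurable A -> (forall x, A x -> t * x <= k) ->
  (normal_prob t 1 A <= (expR (k - t ^+ 2 / 2))%:E * normal_prob 0 1 A)%E.
Proof.
move=> mA tA_le; rewrite /normal_prob -ge0_integralZl ?lee_fin ?expR_ge0 //;
  [|exact: measurable_pdf|exact: pdf_ge0].
apply: ge0_le_integral => //; [exact: pdf_ge0|exact: measurable_pdf| |].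
  by apply: measurable_funeM; exact: measurable_pdf.
move=> x Ax; rewrite -EFinM lee_fin (normal_pdf_shift t) mulrC.
by rewrite ler_wpM2r ?normal_pdf_ge0 // ler_expR lerD2r tA_le.
Qed.

Lemma normal_prob_ge_scale (t k : R) (A : set R) :
  measurable A -> (forall x, A x -> k <= t * x) ->
  ((expR (k - t ^+ 2 / 2))%:E * normal_prob 0 1 A <= normal_prob t 1 A)%E.
Proof.
move=> mA tA_ge; rewrite /normal_prob -ge0_integralZl ?lee_fin ?expR_ge0 //;
  [|exact: measurable_pdf|exact: pdf_ge0].
apply: ge0_le_integral => //; [| |exact: measurable_pdf|].
- by move=> x _; rewrite -EFinM lee_fin mulr_ge0 ?expR_ge0 ?normal_pdf_ge0.
- by apply: measurable_funeM; exact: measurable_pdf.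
move=> x Ax; rewrite -EFinM lee_fin (normal_pdf_shift t) mulrC.
by rewrite ler_wpM2l ?normal_pdf_ge0 // ler_expR lerD2r tA_ge.
Qed.

Lemma normal_mass_ratio_le (t : R) (A B : set R) : measurable A -> measurable B ->
  (forall x y, A x -> B y -> t * x <= t * y) ->
  normal_mass t A * normal_mass 0 B <= normal_mass 0 A * normal_mass t B.
Proof.
move=> mA mB tAB.
have [->|/set0P[x0 Ax0]] := eqVneq A set0.
  by rewrite /normal_mass !measure0 !mul0r.
have [->|/set0P[y0 By0]] := eqVneq B set0.
  by rewrite /normal_mass !measure0 !mulr0.
pose tA := [set t * x | x in A].
have sup_tA : has_sup tA.
  by split; [exists (t * x0), x0 | exists (t * y0) => _ [x Ax <-]; exact: tAB].
(* k separates t * A from t * B, so the likelihood ratio exp (t x - t^2/2) of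
   N(t, 1) to N(0, 1) is at most exp (k - t^2/2) on A and at least that on B. *)
set k := sup tA.
have tA_le x : A x -> t * x <= k by move=> Ax; apply: sup_upper_bound => //; exists x.
have tB_ge y : B y -> k <= t * y.
  by move=> By; apply: ge_sup; [exists (t * x0), x0 | move=> _ [x Ax <-]; exact: tAB].
have := normal_prob_le_scale t k A mA tA_le; have := normal_prob_ge_scale t k B mB tB_ge.
rewrite !normal_massE // -!EFinM !lee_fin; set c := expR _ => ge_B le_A.
apply: (@le_trans _ _ (c * normal_mass 0 A * normal_mass 0 B)).
  by rewrite ler_wpM2r ?normal_mass_ge0.
by rewrite -mulrA mulrCA ler_wpM2l ?normal_mass_ge0.
Qed.

End normal_likelihood_ratio.

Section gaussian_tails.
Context {R : realType} (b : R).

Definition central_region := ~` (upper_tail b `|` lower_tail b).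

Lemma measurable_central_region : measurable central_region.
Proof.
by apply: measurableC; apply: measurableU; [exact: measurable_upper_tail | exact: measurable_lower_tail].
Qed.

Lemma lower_tail_le_central {x y : R} : lower_tail b x -> central_region y -> x <= y.
Proof.
move=> Dx Gy; rewrite leNgt; apply/negP => yx; apply: Gy; right.
exact: le_trans (Phi_nondecreasing _ _ (ltW yx)) Dx.
Qed.

Lemma central_le_upper_tail {x y : R} : upper_tail b x -> central_region y -> y <= x.
Proof.
move=> Ux Gy; rewrite leNgt; apply/negP => xy; apply: Gy; left.
by apply: le_trans Ux; rewrite lerD2l lerN2; exact: Phi_nondecreasing _ _ (ltW xy).
Qed.

Hypothesis b_lt_half : b < 1 / 2.

Lemma normal_mass_tails t : normal_mass t (upper_tail b) + normal_mass t (lower_tail b)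
  + normal_mass t central_region = 1.
Proof.
have UD0 : upper_tail b `&` lower_tail b = set0.
  apply/seteqP; split => // x [].
  rewrite /upper_tail /lower_tail /= => Ux Dx.
  by move: b_lt_half; lra.
have mU := measurable_upper_tail b; have mD := measurable_lower_tail b.
rewrite /central_region normal_massC ?normal_massU //; [ring | exact: measurableU].
Qed.

Hypothesis b_ge0 : 0 <= b.

Lemma normal_mass0_lower_tail_le : normal_mass 0 (lower_tail b) <= b.
Proof.
rewrite -lee_fin -normal_massE; last exact: measurable_lower_tail.
exact: normal_prob0_lower_tail.
Qed.

Lemma normal_mass0_upper_tail_le : normal_mass 0 (upper_tail b) <= b.
Proof.
rewrite -lee_fin -normal_massE; last exact: measurable_upper_tail.
exact: normal_prob0_upper_tail.
Qed.

Lemma normal_mass0_central_ge : 1 - 2 * b <= normal_mass 0 central_region.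
Proof.
have := normal_mass_tails 0.
have := normal_mass0_lower_tail_le; have := normal_mass0_upper_tail_le.
lra.
Qed.

Lemma lower_tail_le_central_mass t : 0 <= t ->
  (1 - 2 * b) * normal_mass t (lower_tail b) <= b * normal_mass t central_region.
Proof.
move=> t_ge0.
have ratio := normal_mass_ratio_le t _ _ (measurable_lower_tail b) measurable_central_region
  (fun x y Dx Gy => ler_wpM2l t_ge0 (lower_tail_le_central Dx Gy)).
apply: (@le_trans _ _ (normal_mass 0 central_region * normal_mass t (lower_tail b))).
  by rewrite ler_wpM2r ?normal_mass_ge0 ?normal_mass0_central_ge.
rewrite mulrC; apply: le_trans ratio _.
by rewrite ler_wpM2r ?normal_mass_ge0 ?normal_mass0_lower_tail_le.
Qed.

Lemma upper_tail_le_central_mass t : t <= 0 ->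
  (1 - 2 * b) * normal_mass t (upper_tail b) <= b * normal_mass t central_region.
Proof.
move=> t_le0.
have ratio := normal_mass_ratio_le t _ _ (measurable_upper_tail b) measurable_central_region
  (fun x y Ux Gy => ler_wnM2l t_le0 (central_le_upper_tail Ux Gy)).
apply: (@le_trans _ _ (normal_mass 0 central_region * normal_mass t (upper_tail b))).
  by rewrite ler_wpM2r ?normal_mass_ge0 ?normal_mass0_central_ge.
rewrite mulrC; apply: le_trans ratio _.
by rewrite ler_wpM2r ?normal_mass_ge0 ?normal_mass0_upper_tail_le.
Qed.

End gaussian_tails.

Section two_of_three.
Context {R : realFieldType}.

(* The probability that at least two of three independent events of
   probabilities x, y, z occur. *)
Definition two_of_three (x y z : R) := x * y + y * z + z * x - 2 * (x * y * z).

Lemma two_of_three_uniq (f : 'I_3 -> R) {p q z : 'I_3} : uniq [:: p; q; z] ->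
  two_of_three (f p) (f q) (f z) = two_of_three (f 0) (f 1) (f 2).
Proof.
have ord3E i (lt_i3 : (i < 3)%N) : Ordinal lt_i3 = i%:R.
  by case: i lt_i3 => [|[|[|//]]] ? ; apply: val_inj.
move: p q z; do 3 case=> -[|[|[|//]]] ?; rewrite !ord3E ?mulr0n ?mulr1n.
all: try by [].
all: by move=> _; rewrite /two_of_three; ring.
Qed.

Lemma two_of_three_le {e x y z : R} : 0 <= x <= 1 -> 0 <= y <= 1 -> z <= e ->
  two_of_three x y z <= e * (x + y) + (1 - 2 * e) * (x * y).
Proof.
move=> /andP[x_ge0 x_le1] /andP[y_ge0 y_le1] z_le.
have : 0 <= x * (1 - y) + y * (1 - x) by rewrite addr_ge0 // mulr_ge0 // subr_ge0.
rewrite /two_of_three; nra.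
Qed.

(* u, d, g: masses of the upper tail, lower tail and central region at a
   nonnegative (p), nonpositive (q) and zero (z) mean. *)
Lemma two_of_three_tails_le (e up dp gp uq dq gq uz dz : R) :
  0 <= e -> 2 * e <= 1 ->
  0 <= up -> 0 <= dp -> 0 <= gp -> up + dp + gp = 1 ->
  0 <= uq -> 0 <= dq -> 0 <= gq -> uq + dq + gq = 1 ->
  uz <= e -> dz <= e ->
  (1 - 2 * e) * dp <= e * gp -> (1 - 2 * e) * uq <= e * gq ->
  two_of_three up uq uz + two_of_three dp dq dz <= 2 * e.
Proof.
move=> e_ge0 e_le up_ge0 dp_ge0 gp_ge0 p_sum uq_ge0 dq_ge0 gq_ge0 q_sum uz_le dz_le dp_le uq_le.
have [up01 dp01 uq01 dq01] :
    [/\ 0 <= up <= 1, 0 <= dp <= 1, 0 <= uq <= 1 & 0 <= dq <= 1].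
  by split; apply/andP; split; lra.
have up_uq : (1 - 2 * e) * (up * uq) <= e * gq.
  by apply: le_trans uq_le; rewrite ler_wpM2l ?subr_ge0 // ler_piMl //; lra.
have dp_dq : (1 - 2 * e) * (dp * dq) <= e * gp.
  by apply: le_trans dp_le; rewrite ler_wpM2l ?subr_ge0 // ler_piMr //; lra.
have := two_of_three_le up01 uq01 uz_le; have := two_of_three_le dp01 dq01 dz_le.
nra.
Qed.

End two_of_three.

Lemma H_rn3_sign_pattern {R : realType} (theta : 'I_3 -> R) : H_rn 2 theta ->
  exists p q z : 'I_3, [/\ uniq [:: p; q; z], 0 <= theta p, theta q <= 0 & theta z = 0].
Proof.
move=> [few_pos few_neg].
have two_le_card (A : set 'I_3) i j : i != j -> i \in A -> j \in A -> (2 <= #|A|)%N.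
  move=> ij Pi Pj; apply: (@leq_trans #|[set i; j]%SET|); first by rewrite cards2 ij.
  by apply: subset_leq_card; apply/fintype.subsetP => k; rewrite in_set2 => /orP[] /eqP ->.
have not_two_pos i j : i != j -> 0 < theta i -> 0 < theta j -> False.
  move=> ij pi pj; move: few_pos; rewrite /n_plus ltnNge => /negP; apply.
  by apply: (two_le_card _ i j ij); apply: mem_set.
have not_two_neg i j : i != j -> theta i < 0 -> theta j < 0 -> False.
  move=> ij ni nj; move: few_neg; rewrite /n_minus ltnNge => /negP; apply.
  by apply: (two_le_card _ i j ij); apply: mem_set.
have [t0|t0|t0] := ltgtP (theta 0) 0; have [t1|t1|t1] := ltgtP (theta 1) 0;
  have [t2|t2|t2] := ltgtP (theta 2) 0;
  first [ exfalso; first [ by apply: (not_two_neg 0 1) | by apply: (not_two_neg 0 2)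
            | by apply: (not_two_neg 1 2) | by apply: (not_two_pos 0 1)
            | by apply: (not_two_pos 0 2) | by apply: (not_two_pos 1 2) ]
        | by exists 0, 1, 2; split; try lra | by exists 0, 2, 1; split; try lra
        | by exists 1, 0, 2; split; try lra | by exists 1, 2, 0; split; try lra
        | by exists 2, 0, 1; split; try lra | by exists 2, 1, 0; split; try lra ].
Qed.

Lemma order_stat_le {R : realType} (k : nat) (s : seq R) (c : R) : (0 < k <= size s)%N ->
  (order_stat k s <= c) = (k <= count (<= c) s)%N.
Proof.
case: k => // k /andP[_ k_lt]; rewrite /order_stat /=.
have sorted_s := sort_sorted (@le_total _ R) s.
have -> : count (<= c) s = count (<= c) (sort <=%R s) by apply/permP; rewrite perm_sym perm_sort.
apply/idP/idP => [nth_le|]; last exact: nth_count_le.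
rewrite ltnNge; apply/negP => count_le.
have := nth_count_gt (x := c) 0 sorted_s (i := k); rewrite count_le size_sort k_lt => /(_ isT).
by rewrite ltNge nth_le.
Qed.

Lemma pc_bonf_le {R : realType} (n r : nat) (p : 'I_n -> R) (a : R) : (0 < r <= n)%N ->
  (pc_bonf r p <= a) = (r <= count (fun i => (p i <= a / (n - r + 1)%:R)%R) (enum 'I_n))%N.
Proof.
move=> r_bounds; rewrite /pc_bonf mulrC -ler_pdivlMr ?ltr0n ?addn1 //.
rewrite order_stat_le; first by rewrite (count_map p).
by rewrite size_map size_enum_ord.
Qed.

Section tail_counts.
Context {R : realType} {T : Type}.

Definition at_least_in {n : nat} (r : nat) (X : 'I_n -> T -> R) (A : set R) : set T :=
  [set w | (r <= count (fun i => X i w \in A) (enum 'I_n))%N].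

Lemma p_rn_le (n r : nat) (t : 'I_n -> R) (a : R) : (0 < r <= n)%N ->
  (p_rn r t <= a) =
  (r <= count (fun i => t i \in upper_tail (a / (n - r + 1)%:R)) (enum 'I_n))%N
  || (r <= count (fun i => t i \in lower_tail (a / (n - r + 1)%:R)) (enum 'I_n))%N.
Proof.
move=> r_bounds; rewrite /p_rn ge_min !pc_bonf_le //.
by congr (_ || _); congr (_ <= _)%N; apply: eq_count => i;
  apply/idP/idP => [h|/set_mem h]; by [exact: mem_set | exact: h].
Qed.

Lemma enum_ord3 : enum 'I_3 = [:: 0; 1; 2].
Proof. by apply: (inj_map val_inj); rewrite val_enum_ord. Qed.

Lemma at_least_two_of_threeE (X : 'I_3 -> T -> R) (A : set R) :
  at_least_in 2 X A =
  (X 0 @^-1` A `&` X 1 @^-1` A `&` X 2 @^-1` setT) `|`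
  (X 0 @^-1` A `&` X 1 @^-1` (~` A) `&` X 2 @^-1` A) `|`
  (X 0 @^-1` (~` A) `&` X 1 @^-1` A `&` X 2 @^-1` A).
Proof.
apply/seteqP; split => w; rewrite /at_least_in /= enum_ord3 /= -!(in_setE A);
  case: (X 0 w \in A); case: (X 1 w \in A); case: (X 2 w \in A) => /=; intuition (auto || discriminate).
Qed.

End tail_counts.

Lemma probabilityU3_le {d} {T : measurableType d} {R : realType} (P : probability T R)
    (A B C : set T) : measurable A -> measurable B -> measurable C ->
  (P (A `|` B `|` C) <= P A + P B + P C)%E.
Proof.
move=> mA mB mC; apply: le_trans (measureU2 _ _ _) _ => //; first exact: measurableU.
by rewrite leeD2r // measureU2.
Qed.

Section independent_triple.
Context {d} {T : measurableType d} {R : realType} {P : probability T R}.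
Variable X : 'I_3 -> {RV P >-> R}.
Hypothesis indX : mutually_independent X.

Lemma independent3_preimageI (A0 A1 A2 : set R) :
  measurable A0 -> measurable A1 -> measurable A2 ->
  P (X 0 @^-1` A0 `&` X 1 @^-1` A1 `&` X 2 @^-1` A2) =
  (P (X 0%R @^-1` A0) * P (X 1%R @^-1` A1) * P (X 2%R @^-1` A2))%E.
Proof.
move=> mA0 mA1 mA2; pose A (i : 'I_3) := nth setT [:: A0; A1; A2] i.
have mA i : measurable (A i).
  by case: i => -[|[|[|n]]] ? //=; rewrite nth_nil; exact: measurableT.
have := indX A mA.
rewrite (_ : [set: 'I_3] = [set` enum 'I_3]); last first.
  by apply/seteqP; split => i //= _; rewrite mem_enum.
by rewrite bigcap_seq -big_enum /= enum_ord3 !big_cons !big_nil setIT setIA mule1 muleA.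
Qed.

Lemma measurable_at_least_two_of_three (A : set R) : measurable A ->
  measurable (at_least_in 2 X A).
Proof.
move=> mA; have mAC := measurableC mA; rewrite at_least_two_of_threeE.
by repeat apply: measurableU; repeat apply: measurableI; exact: measurable_funPTI.
Qed.

Lemma prob_at_least_two_of_three_le (A : set R) (a : 'I_3 -> R) : measurable A ->
  (forall i, P (X i @^-1` A) = (a i)%:E) ->
  (P (at_least_in 2 X A) <= (two_of_three (a 0) (a 1) (a 2))%:E)%E.
Proof.
move=> mA PXA.
have mAC := measurableC mA.
have PXAC i : P (X i @^-1` ~` A) = (1 - a i)%:E.
  by rewrite preimage_setC probability_setC ?PXA //; exact: measurable_funPTI.
have mcell (A0 A1 A2 : set R) : measurable A0 -> measurable A1 -> measurable A2 ->
    measurable (X 0 @^-1` A0 `&` X 1 @^-1` A1 `&` X 2 @^-1` A2).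
  by move=> mA0 mA1 mA2; apply: measurableI; [apply: measurableI|]; exact: measurable_funPTI.
rewrite at_least_two_of_threeE.
apply: le_trans (probabilityU3_le P _ _ _ (mcell _ _ _ mA mA measurableT)
  (mcell _ _ _ mA mAC mA) (mcell _ _ _ mAC mA mA)) _.
rewrite !independent3_preimageI // !PXA !PXAC preimage_setT probability_setT.
rewrite -!EFinM -!EFinD lee_fin le_eqVlt; apply/orP; left; apply/eqP.
by rewrite /two_of_three; ring.
Qed.

End independent_triple.

Lemma normal_tails_two_of_three_le {R : realType} (theta : 'I_3 -> R) (e : R) :
  H_rn 2 theta -> 0 <= e -> e < 1 / 2 ->
  two_of_three (normal_mass (theta 0) (upper_tail e)) (normal_mass (theta 1) (upper_tail e))
    (normal_mass (theta 2) (upper_tail e))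
  + two_of_three (normal_mass (theta 0) (lower_tail e)) (normal_mass (theta 1) (lower_tail e))
    (normal_mass (theta 2) (lower_tail e))
  <= 2 * e.
Proof.
move=> /H_rn3_sign_pattern[p [q [z [pqz theta_p theta_q theta_z]]]] e_ge0 e_lt.
rewrite -(two_of_three_uniq (fun i => normal_mass (theta i) (upper_tail e)) pqz).
rewrite -(two_of_three_uniq (fun i => normal_mass (theta i) (lower_tail e)) pqz).
apply: (two_of_three_tails_le _ _ _ (normal_mass (theta p) (central_region e)) _ _
          (normal_mass (theta q) (central_region e))); rewrite ?theta_z ?normal_mass_ge0 //.
- lra.
- exact: normal_mass_tails.
- exact: normal_mass_tails.
- exact: normal_mass0_upper_tail_le.
- exact: normal_mass0_lower_tail_le.
- exact: lower_tail_le_central_mass.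
- exact: upper_tail_le_central_mass.
Qed.

Theorem proposition1 (R : realType) (d : measure_display) (T : measurableType d)
    (P : probability T R) (theta : 'I_3 -> R) (X : 'I_3 -> {RV P >-> R}) :
  mutually_independent X ->
  (forall i (A : set R), measurable A ->
     distribution P (X i) A = normal_prob (theta i) 1 A) ->
  H_rn 2 theta ->
  forall alpha : R, 0 < alpha < 1 / 2 ->
    (P [set w | (p_rn 2 (fun i => X i w) <= alpha)%R] <= alpha%:E)%E.
Proof.
move=> indX lawX H_theta alpha /andP[alpha_gt0 alpha_lt].
pose e := alpha / 2.
have [e_ge0 e_lt] : 0 <= e /\ e < 1 / 2 by split; rewrite /e; lra.
have lawXE i A : measurable A -> P (X i @^-1` A) = (normal_mass (theta i) A)%:E.
  by move=> mA; rewrite -normal_massE // -lawX.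
have -> : [set w | (p_rn 2 (fun i => X i w) <= alpha)%R] =
    at_least_in 2 X (upper_tail e) `|` at_least_in 2 X (lower_tail e).
  apply/seteqP; split => w /=; rewrite p_rn_le //.
    by move=> /orP[h|h]; [left|right]; exact: h.
  by move=> [h|h]; apply/orP; [left|right]; exact: h.
apply: le_trans (measureU2 _ _ _) _;
  [apply: measurable_at_least_two_of_three; exact: measurable_upper_tail
  |apply: measurable_at_least_two_of_three; exact: measurable_lower_tail|].
have U_le := prob_at_least_two_of_three_le X indX _ _ (measurable_upper_tail e)
  (fun i => lawXE i _ (measurable_upper_tail e)).
have L_le := prob_at_least_two_of_three_le X indX _ _ (measurable_lower_tail e)
  (fun i => lawXE i _ (measurable_lower_tail e)).
apply: le_trans (leeD U_le L_le) _.
rewrite -EFinD lee_fin (_ : alpha = 2 * e); last by rewrite /e; field.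
exact: normal_tails_two_of_three_le.
Qed.
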